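(* Let $\mathcal{S}\subseteq\mathcal{L}$, let $\mathcal{AF}_{\vdash}=(\vdash,\overline{\cdot},\mathsf{id})$ be contrapositable with $\vdash$ satisfying Cut, and let $\Theta$ be a maximal $\mathcal{AF}_{\vdash}(\mathcal{S})$-consistent subset of $\mathcal{S}$. Then $\mathit{Arg}_{\vdash}(\Theta)$ is a stable extension of $\mathcal{AF}_{\mathsf{con}}(\mathcal{S})$.
   Context: $\mathcal{L}$ is a set of formulas; ${\vdash}\subseteq\wp_{\sf fin}(\mathcal{L})\times\mathcal{L}$ is arbitrary and $\overline{\cdot}:\mathcal{L}\to\wp(\mathcal{L})$. $\mathit{Arg}_{\vdash}(\mathcal{S})=\{(\Gamma,\gamma):\Gamma\subseteq\mathcal{S}\text{ finite},\Gamma\vdash\gamma\}$. For a relation $\vdash'$, $\mathcal{AF}_{\vdash'}(\mathcal{S})$ has arguments $\mathit{Arg}_{\vdash'}(\mathcal{S})$, with $(\Gamma,\gamma)$ attacking $(\Gamma',\gamma')$ iff $\gamma\in\overline{\lambda}$ for some $\lambda\in\Gamma'$. A stable extension is a conflict-free set of arguments that attacks every argument not in it. $\vdash^{+\phi}$ is the transitive closure of ${\vdash}\cup\{(\emptyset,\phi)\}$; Cut: for every $\phi$ and finite $\Gamma,\Delta$, if $\Gamma\vdash\phi$ and $\Delta\vdash^{+\phi}\gamma$ then $\Gamma\cup\Delta\vdash\gamma$. Contrapositable: for all finite $\Theta$, if $\Theta\vdash\gamma'$ with $\gamma'\in\overline{\gamma}$, then for every $\sigma\in\Theta$, $(\Theta\cup\{\gamma\})\setminus\{\sigma\}\vdash\sigma'$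 for some $\sigma'\in\overline{\sigma}$. $\Theta\subseteq\mathcal{S}$ is $\mathcal{AF}_{\vdash}(\mathcal{S})$-inconsistent iff there are $\Theta'\subseteq\Theta$ and $\gamma\in\Theta'$ with $\Theta'\setminus\{\gamma\}\vdash\gamma'$ for some $\gamma'\in\overline{\gamma}$, consistent otherwise; maximal consistent = consistent with no consistent proper superset within $\mathcal{S}$. $\vdash_{\mathsf{con}}=\{(\Gamma,\gamma):\Gamma\vdash\gamma,\ \Gamma\text{ consistent}\}$ and $\mathcal{AF}_{\mathsf{con}}(\mathcal{S})=\mathcal{AF}_{\vdash_{\mathsf{con}}}(\mathcal{S})$. *)

From HB Require Import structures.
From mathcomp Require Import all_boot finmap.

Set Implicit Arguments.
Unset Strict Implicit.
Unset Printing Implicit Defensive.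

Local Open Scope fset_scope.

Section Defs.
Variable L : choiceType.

Definition fmlset := L -> Prop.

Definition crel := {fset L} -> L -> Prop.

(* contrariness operator: contr g gp  <->  gp \in overline(g) *)
Definition contrary := L -> L -> Prop.

Definition fsubset (G : {fset L}) (S : fmlset) : Prop := forall x, x \in G -> S x.

Inductive tclos (R : crel) : crel :=
  | tclos_base G g : R G g -> tclos R G g
  | tclos_trans G D d g : d \in D -> tclos R G d -> tclos R D g ->
      tclos R (G `|` (D `\ d)) g.

Definition plus_phi (vd : crel) (phi : L) : crel :=
  tclos (fun G g => vd G g \/ (G = fset0 /\ g = phi)).

Definition Cut (vd : crel) : Prop :=
  forall (phi g : L) (G D : {fset L}),
    vd G phi -> plus_phi vd phi D g -> vd (G `|` D) g.

Definition contrapositable (vd : crel) (contr : contrary) : Prop :=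
  forall (T : {fset L}) (g g' : L), vd T g' -> contr g g' ->
    forall s, s \in T -> exists s', contr s s' /\ vd ((g |` T) `\ s) s'.

Definition argument := ({fset L} * L)%type.

Definition Arg (vd : crel) (S : fmlset) : argument -> Prop :=
  fun a => fsubset a.1 S /\ vd a.1 a.2.

Definition attacks (contr : contrary) (a b : argument) : Prop :=
  exists l, l \in b.1 /\ contr l a.2.

Definition stable_extension (Args : argument -> Prop) (contr : contrary)
    (E : argument -> Prop) : Prop :=
  (forall a, E a -> Args a) /\
  (forall a b, E a -> E b -> ~ attacks contr a b) /\
  (forall b, Args b -> ~ E b -> exists a, E a /\ attacks contr a b).

Definition inconsistent (vd : crel) (contr : contrary) (T : fmlset) : Prop :=
  exists (T' : {fset L}) (g : L), fsubset T' T /\ g \in T' /\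
    exists g', contr g g' /\ vd (T' `\ g) g'.

Definition consistent vd contr T := ~ inconsistent vd contr T.

Definition maximal_consistent (vd : crel) (contr : contrary) (S T : fmlset) : Prop :=
  (forall x, T x -> S x) /\ consistent vd contr T /\
  forall T' : fmlset, (forall x, T x -> T' x) -> (forall x, T' x -> S x) ->
    consistent vd contr T' -> forall x, T' x -> T x.

Definition vdash_con (vd : crel) (contr : contrary) : crel :=
  fun G g => vd G g /\ consistent vd contr (fun x => x \in G).

End Defs.

From mathcomp Require Import all_boot finmap.
From Stdlib Require Import Classical.

Set Implicit Arguments.
Unset Strict Implicit.
Unset Printing Implicit Defensive.

(* If [a] attacks [b] with both in [Arg Theta], the attacked premise [l] together
   with the premises of [a] is an inconsistent subset of [Theta].  If [b] is
   outside [Arg Theta], some premise [l] of [b] is not in [Theta], so by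
   maximality [Theta + l] is inconsistent; by contraposition the inconsistency can
   be shifted onto [l], which gives an argument over [Theta] concluding a
   contrary of [l]. *)

Local Open Scope fset_scope.

Section Consistency.

Variables (L : choiceType) (vd : crel L) (contr : contrary L).

Lemma inconsistentS (T T' : fmlset L) :
  (forall x, T x -> T' x) -> inconsistent vd contr T -> inconsistent vd contr T'.
Proof.
move=> sTT' [G [g [GT rest]]]; exists G, g; split=> // x /GT; exact: sTT'.
Qed.

Lemma maximal_consistent_add (S Theta : fmlset L) (l : L) :
  maximal_consistent vd contr S Theta -> S l -> ~ Theta l ->
  inconsistent vd contr (fun x => Theta x \/ x = l).
Proof.
move=> [ThS [_ maxTh]] Sl nThl; apply: NNPP => consl; apply: nThl.
apply: (maxTh _ _ _ consl) => [x|x [/ThS|->]|]; by [left | | right].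
Qed.

Hypothesis contrapositable_vd : contrapositable vd contr.

Lemma contrapositable_attack_inconsistent (G : {fset L}) (g l : L) :
  vd G g -> contr l g -> inconsistent vd contr (fun x => x \in l |` G).
Proof.
move=> vdGg clg; exists (l |` G), l; split=> //; split; first exact: fsetU11.
have [lG|lNG] := boolP (l \in G).
  have [l' [cll' vdl']] := contrapositable_vd vdGg clg lG.
  by exists l'.
by exists g; rewrite fsetU1K.
Qed.

Lemma contrapositable_inconsistent_member (T : {fset L}) (g g' l : L) :
  g \in T -> contr g g' -> vd (T `\ g) g' -> l \in T ->
  exists l', contr l l' /\ vd (T `\ l) l'.
Proof.
move=> gT cgg' vdg' lT; have [->|lNg] := eqVneq l g; first by exists g'.
have lTg : l \in T `\ g by rewrite in_fsetD1 lNg.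
have [l' [cll' vdl']] := contrapositable_vd vdg' cgg' lTg.
by exists l'; rewrite fsetD1K in vdl'.
Qed.

End Consistency.

Section Extension.

Variables (L : choiceType) (vd : crel L) (contr : contrary L) (S Theta : fmlset L).

Lemma Arg_consistent_sub_Arg_con :
  (forall x, Theta x -> S x) -> consistent vd contr Theta ->
  forall a, Arg vd Theta a -> Arg (vdash_con vd contr) S a.
Proof.
move=> ThS consTh [G g] [/= GTh vdGg]; split=> [x /GTh /ThS //|]; split=> //.
by move/(inconsistentS GTh).
Qed.

Lemma Arg_consistent_conflict_free :
  contrapositable vd contr -> consistent vd contr Theta ->
  forall a b, Arg vd Theta a -> Arg vd Theta b -> ~ attacks contr a b.
Proof.
move=> CP consTh [G g] [D d] [/= GTh vdGg] [/= DTh _] [l [lD clg]].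
apply/consTh/(inconsistentS _ (contrapositable_attack_inconsistent CP vdGg clg)).
by move=> x /fset1UP [->|/GTh]; [apply: DTh |].
Qed.

Lemma Arg_maximal_consistent_attacks :
  contrapositable vd contr -> maximal_consistent vd contr S Theta ->
  forall b, Arg (vdash_con vd contr) S b -> ~ Arg vd Theta b ->
  exists a, Arg vd Theta a /\ attacks contr a b.
Proof.
move=> CP maxTh [D d] [/= DS [vdDd _]] nArg.
have [l [lD nThl]] : exists l, l \in D /\ ~ Theta l.
  apply: NNPP => allTh; apply: nArg; split=> //= x xD.
  by apply: NNPP => nThx; apply: allTh; exists x.
have [T [g [TThl [gT [g' [cgg' vdg']]]]]] :=
  maximal_consistent_add maxTh (DS l lD) nThl.
have [lT|lNT] := boolP (l \in T); last first.
  have [_ [consTh _]] := maxTh.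
  case: consTh; exists T, g; split; last by split=> //; exists g'.
  by move=> x xT; case: (TThl x xT) => // xl; rewrite -xl xT in lNT.
have [l' [cll' vdl']] := contrapositable_inconsistent_member CP gT cgg' vdg' lT.
exists (T `\ l, l'); split; last by exists l.
split=> // x /fsetD1P [xNl /TThl [//|xl]].
by rewrite xl eqxx in xNl.
Qed.

End Extension.

Theorem lemma9 (L : choiceType) (vd : crel L) (contr : contrary L)
  (S Theta : fmlset L) :
  contrapositable vd contr -> Cut vd ->
  maximal_consistent vd contr S Theta ->
  stable_extension (Arg (vdash_con vd contr) S) contr (Arg vd Theta).
Proof.
move=> CP _ maxTh; have [ThS [consTh _]] := maxTh.
split; [|split].
- exact: Arg_consistent_sub_Arg_con ThS consTh.
- exact: Arg_consistent_conflict_free CP consTh.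
- exact: Arg_maximal_consistent_attacks CP maxTh.
Qed.
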